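(* Let $R\subseteq S$ be as in the context. Let $n=n_1+\cdots+n_\ell$ and $N=N_1+\cdots+N_\ell$ with positive integers $n_i,N_i$, let $\mathcal{C}\subseteq S^n$ be a code, and let $A={\rm Diag}(A_1,\ldots,A_\ell)\in R^{n\times N}$ with $A_i\in R^{n_i\times N_i}$. Let $\rho=n-{\rm frk}(A)$ and let $t\ge 0$ be an integer. If $2t+\rho+1\le{\rm d}_{SR}(\mathcal{C})$ (sum-rank distance for the partition $n=n_1+\cdots+n_\ell$), then there exists a map $D_A:S^N\to\mathcal{C}$ with $D_A(\mathbf{c}A+\mathbf{e})=\mathbf{c}$ for all $\mathbf{c}\in\mathcal{C}$ and all $\mathbf{e}\in S^N$ with ${\rm wt}_{SR}(\mathbf{e})\le t$ (sum-rank weight for the partition $N=N_1+\cdots+N_\ell$).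
   Context: $R$ is a finite commutative chain ring with maximal ideal $\mathfrak{m}$; $S=R[x]/(h)$ with $h\in R[x]$ monic of degree $m$ irreducible modulo $\mathfrak{m}$, a free $R$-module of rank $m$; vectors in $S^n$ are multiplied by matrices over $R\subseteq S$ in the usual way. For a matrix $B$ over $R$ with Smith normal form diagonal $d_1,\ldots,d_r$, ${\rm rk}(B)$ is the number of nonzero $d_i$ and the free rank ${\rm frk}(B)$ is the number of $d_i$ that are units. For $\mathbf{u}\in S^s$, ${\rm rk}(\mathbf{u})$ is the rank of the $m\times s$ coordinate matrix of $\mathbf{u}$ over $R$ with respect to an $R$-basis of $S$. For $\mathbf{c}=(\mathbf{c}^{(1)},\ldots,\mathbf{c}^{(\ell)})$ split according to a length partition, ${\rm wt}_{SR}(\mathbf{c})=\sum_i{\rm rk}(\mathbf{c}^{(i)})$, and ${\rm d}_{SR}(\mathcal{C})$ is the minimum of ${\rm wt}_{SR}(\mathbf{c}-\mathbf{d})$ over distinct $\mathbf{c},\mathbf{d}\in\mathcal{C}$. *)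

From HB Require Import structures.
From mathcomp Require Import all_boot all_order all_algebra.
Set Implicit Arguments. Unset Strict Implicit. Unset Printing Implicit Defensive.
Import GRing.Theory.
Local Open Scope ring_scope.

Section ChainRing.
Variable R : finComUnitRingType.

Definition is_ideal (I : {set R}) : bool :=
  [&& 0 \in I, [forall x in I, forall y in I, x + y \in I]
    & [forall r : R, forall x in I, r * x \in I]].

Definition chain_ring : Prop :=
  forall I J : {set R}, is_ideal I -> is_ideal J -> I \subset J \/ J \subset I.

(* the maximal ideal of the local ring R = the set of non-units *)
Definition mideal : pred R := fun a => a \isn't a GRing.unit.

(* reduction modulo m of polynomials: p == q in (R/m)[x] *)
Definition red_eq (p q : {poly R}) : Prop := forall k, (p - q)`_k \in mideal.
(* the reduction of p is a unit of (R/m)[x] (a nonzero constant) *)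
Definition red_unit (p : {poly R}) : Prop :=
  p`_0 \is a GRing.unit /\ forall k, (0 < k)%N -> p`_k \in mideal.
Definition irreducible_mod (h : {poly R}) : Prop :=
  ~ red_unit h /\
  forall f g : {poly R}, red_eq h (f * g) -> red_unit f \/ red_unit g.

Definition rdvd (a b : R) : bool := [exists c : R, b == a * c].

Definition snf_diag p q (D : 'M[R]_(p, q)) : bool :=
  [forall i : 'I_p, forall j : 'I_q, (i != j :> nat) ==> (D i j == 0)] &&
  [forall i : 'I_p, forall j : 'I_q, forall i' : 'I_p, forall j' : 'I_q,
     [&& (i == j :> nat), (i' == j' :> nat) & (i < i')%N] ==> rdvd (D i j) (D i' j')].

Definition snf_of p q (B D : 'M[R]_(p, q)) : bool :=
  snf_diag D &&
  [exists P : 'M[R]_p, exists Q : 'M[R]_q,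
     [&& P \in unitmx, Q \in unitmx & B == P *m D *m Q]].

Definition diag_count p q (P : pred R) (D : 'M[R]_(p, q)) : nat :=
  #|[set ij : 'I_p * 'I_q | (ij.1 == ij.2 :> nat) && P (D ij.1 ij.2)]|.

Definition mrk p q (B : 'M[R]_(p, q)) : nat :=
  if [pick D | snf_of B D] is Some D then diag_count (fun a => a != 0) D else 0%N.

Definition mfrk p q (B : 'M[R]_(p, q)) : nat :=
  if [pick D | snf_of B D] is Some D
  then diag_count (fun a => a \is a GRing.unit) D else 0%N.

End ChainRing.

Section SumRank.
Variables (R : finComUnitRingType) (h : {poly R}).

(* S = {poly %/ h}; the coordinate (m x s) matrix of u in S^s w.r.t. the
   R-basis 1, x, ..., x^(m-1) of S, m = deg h *)
Definition coordmx s (u : 'rV[{poly %/ h}]_s) : 'M[R]_((size h).-1, s) :=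
  \matrix_(k, j) ((u 0 j : {poly R})`_k).

Definition rk_vec s (u : 'rV[{poly %/ h}]_s) : nat := mrk (coordmx u).

Definition wtSR l (ns : 'I_l -> nat) (c : 'rV[{poly %/ h}]_(\sum_i ns i)) : nat :=
  \sum_(i < l) rk_vec (submxrow c i).

End SumRank.
Arguments coordmx {R h s}.
Arguments rk_vec {R h s}.
Arguments wtSR {R h l}.

From HB Require Import structures.
From mathcomp Require Import all_boot all_order all_algebra.
Set Implicit Arguments. Unset Strict Implicit. Unset Printing Implicit Defensive.
Import GRing.Theory.
Local Open Scope ring_scope.

(* Over a finite chain ring divisibility is total, so every matrix has a Smith
   normal form [B = P D Q], and the non-units form the maximal ideal [m].
   Hence rk(B) is the inner rank of [B] (the least [r] such that [B = X Y]
   with [X] having [r] columns), which is subadditive, and frk(B) is the rank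
   of [B] modulo [m].  Splitting off the unit part of [D] gives
   rk(x) <= rk(x A) + n - frk(A) blockwise, so wt(x) <= wt(x A) + rho for
   the sum-rank weights.  If two codewords [c], [c'] were both within
   distance [t] of a received word, then wt((c - c') A) <= 2t and
   d(c, c') <= 2t + rho < d_SR(C); so decoding to any codeword within
   distance [t] of the received word is correct. *)

Lemma card_predC_codom k p (e : 'I_k -> 'I_p) :
  injective e -> #|[pred i | i \notin codom e]| = (p - k)%N.
Proof.
move=> inj_e; have cardCe := cardC [pred i | i \in codom e].
have codom_card : #|[pred i | i \in codom e]| = k.
  by rewrite -[RHS]card_ord -(card_codom inj_e); apply: eq_card.
rewrite codom_card card_ord in cardCe.
by rewrite -[in RHS]cardCe addKn; apply: eq_card.
Qed.

Section Matrices.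
Variable R : pzRingType.

Lemma submxrow_mul_block_diag m l (ns Ns : 'I_l -> nat)
    (M : 'M[R]_(m, \sum_i ns i)) (A : 'M[R]_(\sum_i ns i, \sum_i Ns i)) :
  (forall i j, i != j -> submxblock A i j = 0) ->
  forall j, submxrow (M *m A) j = submxrow M j *m submxblock A j j.
Proof.
move=> Ablock j; rewrite -mul_submxrow -[M in M *m _]submxrowK.
have -> : submxrow A j = \mxcol_i submxblock A i j.
  by rewrite -[LHS]submxcolK; apply: eq_mxcol => i; rewrite submxblockEh.
rewrite mul_mxrow_mxcol (bigD1 j) //= big1 ?addr0 // => i ne_ij.
by rewrite Ablock ?mulmx0.
Qed.

Definition rdiag_mx p q (d : nat -> R) : 'M[R]_(p, q) :=
  \matrix_(i, j) (if i == j :> nat then d i else 0).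

Lemma rdiag_mx_cons p q a d :
  rdiag_mx p.+1 q.+1 (fun k => if k is k'.+1 then d k' else a)
  = block_mx a%:M 0 0 (rdiag_mx p q d) :> 'M_(1 + p, 1 + q).
Proof.
apply/matrixP => i j.
case: (split_ordP i) => i1 ->; case: (split_ordP j) => j1 ->.
- by rewrite block_mxEul !mxE !ord1.
- by rewrite block_mxEur !mxE !ord1.
- by rewrite block_mxEdl !mxE !ord1 eq_sym.
- by rewrite block_mxEdr !mxE /= eqSS.
Qed.

Lemma mul_block_diag1 p q a (P : 'M[R]_p) (D : 'M[R]_(p, q)) (Q : 'M[R]_q) :
  block_mx 1%:M 0 0 P *m block_mx a%:M 0 0 D *m block_mx 1%:M 0 0 Q
  = block_mx a%:M 0 0 (P *m D *m Q) :> 'M_(1 + p, 1 + q).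
Proof. by rewrite !mulmx_block !(mul1mx, mul0mx, mulmx0, mulmx1, addr0, add0r). Qed.

Lemma rdiag_mul_row0 p r s (d : nat -> R) (M : 'M[R]_(r, s)) (i : 'I_p) j :
  (r <= i)%N -> (rdiag_mx p r d *m M) i j = 0.
Proof.
move=> le_ri; rewrite mxE big1 // => l _; rewrite mxE gtn_eqF ?mul0r //.
exact: leq_trans (ltn_ord l) le_ri.
Qed.

Definition is_rdiag_mx p q (D : 'M[R]_(p, q)) :=
  forall (i : 'I_p) (j : 'I_q), i != j :> nat -> D i j = 0.

Lemma mulmx_rdiag_col p q n (M : 'M[R]_(n, p)) (D : 'M[R]_(p, q))
    i (l : 'I_p) (j : 'I_q) :
  is_rdiag_mx D -> l = j :> nat -> (M *m D) i j = M i l * D l j.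
Proof.
move=> Ddiag elj; rewrite mxE (bigD1 l) //= big1 ?addr0 // => l' ne_l'.
rewrite Ddiag ?mulr0 //; apply: contra ne_l' => /eqP el'j.
by apply/eqP/val_inj; rewrite /= el'j elj.
Qed.

Section Selection.
Variables (k p : nat) (e : 'I_k -> 'I_p).
Hypothesis inj_e : injective e.

Lemma mulmx_tr_rowsub1 n (M : 'M[R]_(n, p)) : M *m (rowsub e 1%:M)^T = colsub e M.
Proof. by rewrite trmx_mxsub trmx1 mulmx_colsub mulmx1. Qed.

Lemma rowsub1_mul_tr : rowsub e 1%:M *m (rowsub e 1%:M)^T = 1%:M :> 'M[R]_k.
Proof.
by apply/matrixP => t u; rewrite mulmx_tr_rowsub1 !mxE (inj_eq inj_e).
Qed.

Lemma tr_rowsub1_mul :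
  (rowsub e 1%:M)^T *m rowsub e 1%:M = diag_mx (\row_i (i \in codom e)%:R) :> 'M[R]_p.
Proof.
apply/matrixP => i j; rewrite !mxE; have [/codomP[t ->]|ie] := boolP (i \in codom e).
  rewrite (bigD1 t) //= big1 => [|u ne_ut]; first by rewrite !mxE eqxx mul1r addr0.
  by rewrite !mxE (inj_eq inj_e) (negbTE ne_ut) mul0r.
rewrite big1 ?mul0rn // => t _; rewrite !mxE.
have /negbTE -> : e t != i by apply: contraNneq ie => <-; apply: codom_f.
by rewrite mul0r.
Qed.

End Selection.

Lemma diag_indicatorC p (T : {pred 'I_p}) :
  1%:M - diag_mx (\row_i (i \in T)%:R) = diag_mx (\row_i (i \notin T)%:R) :> 'M[R]_p.
Proof.
apply/matrixP => i j; rewrite !mxE.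
by case: (i == j); case: (i \in T); rewrite ?subrr ?subr0.
Qed.

Definition inner_rank_le p q (M : 'M[R]_(p, q)) r :=
  exists r' (X : 'M[R]_(p, r')) (Y : 'M[R]_(r', q)), (r' <= r)%N /\ M = X *m Y.

Lemma inner_rank_le_mul p q r (X : 'M[R]_(p, r)) (Y : 'M[R]_(r, q)) :
  inner_rank_le (X *m Y) r.
Proof. by exists r, X, Y. Qed.

Lemma inner_rank_leMl p q s r (N : 'M[R]_(s, p)) (M : 'M[R]_(p, q)) :
  inner_rank_le M r -> inner_rank_le (N *m M) r.
Proof. by case=> r' [X [Y [le_r' ->]]]; exists r', (N *m X), Y; rewrite mulmxA. Qed.

Lemma inner_rank_leMr p q s r (M : 'M[R]_(p, q)) (N : 'M[R]_(q, s)) :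
  inner_rank_le M r -> inner_rank_le (M *m N) r.
Proof. by case=> r' [X [Y [le_r' ->]]]; exists r', X, (Y *m N); rewrite mulmxA. Qed.

Lemma inner_rank_leD p q r s (M N : 'M[R]_(p, q)) :
  inner_rank_le M r -> inner_rank_le N s -> inner_rank_le (M + N) (r + s)%N.
Proof.
case=> [r' [X1 [Y1 [le_r' ->]]]] [s' [X2 [Y2 [le_s' ->]]]].
by exists (r' + s')%N, (row_mx X1 X2), (col_mx Y1 Y2); rewrite mul_row_col leq_add.
Qed.

Lemma inner_rank_le_trunc p q r (M : 'M[R]_(p, q)) :
  inner_rank_le (\matrix_(i, j) if (i < r)%N then M i j else 0) r.
Proof.
pose X : 'M[R]_(p, r) := rdiag_mx p r (fun=> 1).
suff -> : \matrix_(i, j) (if (i < r)%N then M i j else 0) = X *m (X^T *m M).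
  exact: inner_rank_le_mul.
apply/matrixP => i j; rewrite !mxE; case: ltnP => [lt_ir|le_ri]; last first.
  by rewrite big1 // => l _; rewrite mxE gtn_eqF ?mul0r // (leq_trans (ltn_ord l) le_ri).
rewrite (bigD1 (Ordinal lt_ir)) //= big1 => [|l ne_l]; last first.
  by rewrite mxE ifN ?mul0r //; apply: contra ne_l => /eqP eil; apply/eqP/val_inj.
rewrite !mxE eqxx mul1r addr0 (bigD1 i) //= big1 => [|i' ne_i']; last first.
  by rewrite !mxE ifN ?mul0r //; apply: contra ne_i' => /eqP eil; apply/eqP/val_inj.
by rewrite !mxE eqxx mul1r addr0.
Qed.

Lemma inner_rank_le_diag_indicator p (T : {pred 'I_p}) :
  inner_rank_le (diag_mx (\row_i (i \in T)%:R) : 'M[R]_p) #|T|.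
Proof.
have codomT : codom (enum_val (A := T)) =i T.
  move=> i; apply/codomP/idP => [[t ->]|iT]; first exact: enum_valP.
  by exists (enum_rank_in iT i); rewrite enum_rankK_in.
have -> : diag_mx (\row_i (i \in T)%:R)
    = diag_mx (\row_i (i \in codom (enum_val (A := T)))%:R) :> 'M[R]_p.
  by congr diag_mx; apply/rowP => i; rewrite !mxE codomT.
rewrite -tr_rowsub1_mul; last exact: enum_val_inj.
exact: inner_rank_le_mul.
Qed.

End Matrices.

Section ChainRing.
Variable R : finComUnitRingType.
Implicit Types a b x y : R.
Local Notation mideal := (@mideal R).

Lemma midealE a : (a \in mideal) = (a \isn't a GRing.unit). Proof. by []. Qed.

Lemma rdvdP a b : reflect (exists c, b = a * c) (rdvd a b).
Proof. by apply: (iffP existsP) => [[c /eqP ->]|[c ->]]; exists c. Qed.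

Lemma rdvdr0 a : rdvd a 0. Proof. by apply/rdvdP; exists 0; rewrite mulr0. Qed.
Lemma rdvdrr a : rdvd a a. Proof. by apply/rdvdP; exists 1; rewrite mulr1. Qed.

Lemma rdvd_trans x a b : rdvd x a -> rdvd a b -> rdvd x b.
Proof.
by move=> /rdvdP[c ->] /rdvdP[d ->]; apply/rdvdP; exists (c * d); rewrite mulrA.
Qed.

Lemma rdvdD x a b : rdvd x a -> rdvd x b -> rdvd x (a + b).
Proof.
by move=> /rdvdP[c ->] /rdvdP[d ->]; apply/rdvdP; exists (c + d); rewrite mulrDr.
Qed.

Lemma rdvdN x a : rdvd x a -> rdvd x (- a).
Proof. by move=> /rdvdP[c ->]; apply/rdvdP; exists (- c); rewrite mulrN. Qed.

Lemma rdvdMl x a b : rdvd x b -> rdvd x (a * b).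
Proof. by move=> /rdvdP[c ->]; apply/rdvdP; exists (a * c); rewrite mulrCA. Qed.

Lemma rdvdMr x a b : rdvd x a -> rdvd x (a * b).
Proof. by rewrite mulrC; apply: rdvdMl. Qed.

Lemma rdvd_sum x I (r : seq I) (P : pred I) (F : I -> R) :
  (forall i, P i -> rdvd x (F i)) -> rdvd x (\sum_(i <- r | P i) F i).
Proof.
move=> dvF; apply: (big_ind (rdvd x)) => //; first exact: rdvdr0.
exact: rdvdD.
Qed.

Lemma mideal0 : 0 \in mideal. Proof. by rewrite midealE unitr0. Qed.

Lemma midealMl a b : b \in mideal -> a * b \in mideal.
Proof. by rewrite !midealE unitrM negb_and => ->; rewrite orbT. Qed.

Lemma midealMr a b : a \in mideal -> a * b \in mideal.
Proof. by rewrite mulrC; apply: midealMl. Qed.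

Lemma mideal_annihilator a b : a != 0 -> b * a = 0 -> b \in mideal.
Proof.
move=> a_neq0 ba0; apply/negP => b_unit; move/eqP: a_neq0; apply.
by rewrite -[a]mul1r -(mulVr b_unit) -mulrA ba0 mulr0.
Qed.

Definition dvd_mx x p q (M : 'M[R]_(p, q)) := forall i j, rdvd x (M i j).

Lemma dvd_mxMl x p q r (N : 'M[R]_(p, q)) (M : 'M[R]_(q, r)) :
  dvd_mx x M -> dvd_mx x (N *m M).
Proof. by move=> dvM i j; rewrite mxE; apply: rdvd_sum => k _; apply: rdvdMl. Qed.

Lemma dvd_mxMr x p q r (M : 'M[R]_(p, q)) (N : 'M[R]_(q, r)) :
  dvd_mx x M -> dvd_mx x (M *m N).
Proof. by move=> dvM i j; rewrite mxE; apply: rdvd_sum => k _; apply: rdvdMr. Qed.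

Lemma dvd_mxP a p q (M : 'M[R]_(p, q)) : dvd_mx a M -> exists M', M = a *: M'.
Proof.
move=> dvM; exists (\matrix_(i, j) odflt 0 [pick c | M i j == a * c]).
apply/matrixP => i j; rewrite !mxE; case: pickP => [c /eqP //|none].
by have /existsP[c] := dvM i j; rewrite none.
Qed.

Definition dvd_chain (d : nat -> R) := forall k, rdvd (d k) (d k.+1).

Lemma dvd_chain_trans d m n : dvd_chain d -> (m < n)%N -> rdvd (d m) (d n).
Proof.
move=> chd; elim: n => // n IHn; rewrite ltnS leq_eqVlt => /predU1P[-> //|lt_mn].
exact: rdvd_trans (IHn lt_mn) (chd n).
Qed.

Hypothesis chainR : chain_ring R.

Lemma rdvd_total a b : rdvd a b || rdvd b a.
Proof.
pose multiples x := [set y | rdvd x y].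
have multiples_ideal x : is_ideal (multiples x).
  apply/and3P; split; first by rewrite inE rdvdr0.
  - apply/forall_inP => y; rewrite inE => dvy; apply/forall_inP => z.
    by rewrite !inE; apply: rdvdD.
  - by apply/forallP => r; apply/forall_inP => y; rewrite !inE; apply: rdvdMl.
have multiples_self x : x \in multiples x by rewrite inE rdvdrr.
case: (chainR (multiples_ideal a) (multiples_ideal b)) => /subsetP sub.
- by move: (sub a (multiples_self a)); rewrite inE orbC => ->.
- by move: (sub b (multiples_self b)); rewrite inE => ->.
Qed.

(* Of two non-units one divides the other, so their sum is a multiple of a non-unit. *)
Lemma midealD a b : a \in mideal -> b \in mideal -> a + b \in mideal.
Proof.
have [/rdvdP[c ->]|/rdvdP[c ->]] := orP (rdvd_total a b) => a_nu b_nu.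
- by rewrite -{1}[a]mulr1 -mulrDr midealMr.
- by rewrite -{2}[b]mulr1 -mulrDr midealMr.
Qed.

Lemma mideal_sum I (r : seq I) (P : pred I) (F : I -> R) :
  (forall i, P i -> F i \in mideal) -> \sum_(i <- r | P i) F i \in mideal.
Proof.
move=> F_nu; apply: (big_ind (fun a => a \in mideal)) => //; first exact: mideal0.
exact: midealD.
Qed.

(* An entry with the most multiples divides every other entry. *)
Lemma pivot_exists p q (B : 'M[R]_(p.+1, q.+1)) : exists i j, dvd_mx (B i j) B.
Proof.
pose multiples (ij : 'I_p.+1 * 'I_q.+1) := [set y | rdvd (B ij.1 ij.2) y].
have [[i j] _ max_ij] :=
  @arg_maxnP _ (ord0, ord0) xpredT (fun ij => #|multiples ij|) isT.
exists i, j => i' j'; have [//|dv'] := orP (rdvd_total (B i j) (B i' j')).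
have sub : multiples (i, j) \subset multiples (i', j').
  by apply/subsetP => y; rewrite !inE; apply: rdvd_trans.
suff : B i' j' \in multiples (i, j) by rewrite inE.
have -> : multiples (i, j) = multiples (i', j').
  by apply/eqP; rewrite eqEcard sub; exact: max_ij.
by rewrite inE rdvdrr.
Qed.

Lemma corner_pivot p q (B : 'M[R]_(p.+1, q.+1)) :
  exists P Q, [/\ P \in unitmx, Q \in unitmx
    & dvd_mx ((P *m B *m Q) ord0 ord0) (P *m B *m Q)].
Proof.
have [i [j dvB]] := pivot_exists B.
exists (tperm_mx ord0 i), (tperm_mx ord0 j); rewrite !unitmx_perm; split=> //.
have -> : (tperm_mx ord0 i *m B *m tperm_mx ord0 j) ord0 ord0 = B i j.
  by rewrite -xrowE -xcolE !mxE !perm.tpermL.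
by apply: dvd_mxMr; apply: dvd_mxMl.
Qed.

Lemma corner_elim p q (B : 'M[R]_(1 + p, 1 + q)) : dvd_mx (B ord0 ord0) B ->
  exists L U C, [/\ L \in unitmx, U \in unitmx,
    L *m B *m U = block_mx (B ord0 ord0)%:M 0 0 C
    & forall x, dvd_mx x B -> dvd_mx x C].
Proof.
move=> dvB.
have [u' Eu] : exists u', ursubmx B = B ord0 ord0 *: u'.
  by apply: dvd_mxP => i j; rewrite !mxE; apply: dvB.
have [v' Ev] : exists v', dlsubmx B = B ord0 ord0 *: v'.
  by apply: dvd_mxP => i j; rewrite !mxE; apply: dvB.
have Eul : ulsubmx B = (B ord0 ord0)%:M.
  by apply/matrixP => i j; rewrite !ord1 !mxE /=; congr (B _ _); apply: val_inj.
exists (block_mx 1%:M 0 (- v') 1%:M), (block_mx 1%:M (- u') 0 1%:M).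
exists (drsubmx B - v' *m ursubmx B); split.
- by rewrite unitmxE det_lblock !det1 mulr1 unitr1.
- by rewrite unitmxE det_ublock !det1 mulr1 unitr1.
- rewrite -[B in LHS]submxK Eul !mulmx_block.
  rewrite !(mul1mx, mul0mx, mulmx0, mulmx1, addr0, add0r).
  rewrite mulNmx mul_mx_scalar -Ev addNr mulmxN mul_scalar_mx -Eu addNr.
  by rewrite mul0mx add0r mulNmx addrC.
- move=> x dvxB i j; rewrite !mxE; apply: rdvdD; first exact: dvxB.
  apply/rdvdN/rdvd_sum => k _; apply: rdvdMl; rewrite !mxE; exact: dvxB.
Qed.

Definition smith_decomposition p q (B : 'M[R]_(p, q)) P Q d :=
  [/\ P \in unitmx, Q \in unitmx, dvd_chain d,
    forall x, dvd_mx x B -> forall k, rdvd x (d k)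
    & B = P *m rdiag_mx p q d *m Q].

Lemma smith_decomposition0 p q :
  smith_decomposition (0 : 'M[R]_(p, q)) 1%:M 1%:M (fun=> 0).
Proof.
split; rewrite ?unitmx1 //.
- by move=> k; apply: rdvdr0.
- by move=> x _ k; apply: rdvdr0.
- by rewrite mul1mx mulmx1; apply/matrixP => i j; rewrite !mxE; case: eqP.
Qed.

Lemma smith_normal_form p q (B : 'M[R]_(p, q)) :
  exists P Q d, smith_decomposition B P Q d.
Proof.
elim: p q B => [|p IHp] [|q] B; rewrite ?flatmx0 ?thinmx0;
  try by exists 1%:M, 1%:M, (fun=> 0); apply: smith_decomposition0.
have [P0 [Q0 [P0u Q0u dvB1]]] := corner_pivot B.
have [L [U [C [Lu Uu EB1 dvC]]]] := corner_elim dvB1.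
have [P' [Q' [d' [P'u Q'u chd' dvd' EC]]]] := IHp q C.
have dvB_C x : dvd_mx x B -> dvd_mx x C by move=> dvB; apply/dvC/dvd_mxMr/dvd_mxMl.
pose d k := if k is k'.+1 then d' k' else (P0 *m B *m Q0) ord0 ord0.
exists (invmx P0 *m invmx L *m block_mx 1%:M 0 0 P').
exists (block_mx 1%:M 0 0 Q' *m invmx U *m invmx Q0), d; split.
- rewrite !unitmx_mul !unitmx_inv P0u Lu.
  by have := block_diag_mx_unit (1%:M : 'M[R]_1) P'; rewrite unitmx1 P'u.
- rewrite !unitmx_mul !unitmx_inv Q0u Uu !andbT.
  by have := block_diag_mx_unit (1%:M : 'M[R]_1) Q'; rewrite unitmx1 Q'u.
- by case=> [|k]; [apply/dvd'/dvC | apply: chd'].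
- move=> x dvB [|k]; last exact/dvd'/dvB_C.
  by apply: dvd_mxMr; apply: dvd_mxMl.
have {1}-> : B = invmx P0 *m (invmx L *m (L *m (P0 *m B *m Q0) *m U) *m invmx U)
                   *m invmx Q0.
  by rewrite !mulmxA !mulmxK // mulmxKV // mulVmx // mul1mx.
by rewrite EB1 EC -mul_block_diag1 -rdiag_mx_cons !mulmxA.
Qed.

Definition mideal_mx p q (M : 'M[R]_(p, q)) := forall i j, M i j \in mideal.

Lemma mideal_mxD p q (M N : 'M[R]_(p, q)) :
  mideal_mx M -> mideal_mx N -> mideal_mx (M + N).
Proof. by move=> mM mN i j; rewrite mxE; apply: midealD. Qed.

Lemma mideal_mxMl p q r (N : 'M[R]_(p, q)) (M : 'M[R]_(q, r)) :
  mideal_mx M -> mideal_mx (N *m M).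
Proof. by move=> mM i j; rewrite mxE; apply: mideal_sum => k _; apply: midealMl. Qed.

Lemma mideal_mxMr p q r (M : 'M[R]_(p, q)) (N : 'M[R]_(q, r)) :
  mideal_mx M -> mideal_mx (M *m N).
Proof. by move=> mM i j; rewrite mxE; apply: mideal_sum => k _; apply: midealMr. Qed.

Lemma unitmx_row_mideal n (W : 'M[R]_n) i :
  W \in unitmx -> ~ (forall j, W i j \in mideal).
Proof.
rewrite unitmxE (expand_det_row _ i) => det_unit row_nu; move: det_unit.
by apply/negP; rewrite -midealE; apply: mideal_sum => j _; apply: midealMr.
Qed.

Definition inner_rank_le_mod p q (M : 'M[R]_(p, q)) r :=
  exists2 N, mideal_mx (M - N) & inner_rank_le N r.

Lemma inner_rank_le_mod_of p q (M : 'M[R]_(p, q)) r :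
  inner_rank_le M r -> inner_rank_le_mod M r.
Proof. by exists M; rewrite // subrr => i j; rewrite mxE mideal0. Qed.

Lemma inner_rank_le_modMl p q s r (N : 'M[R]_(s, p)) (M : 'M[R]_(p, q)) :
  inner_rank_le_mod M r -> inner_rank_le_mod (N *m M) r.
Proof.
case=> M' mM rkM'; exists (N *m M'); last exact: inner_rank_leMl.
by rewrite -mulmxBr; apply: mideal_mxMl.
Qed.

Lemma inner_rank_le_modMr p q s r (M : 'M[R]_(p, q)) (N : 'M[R]_(q, s)) :
  inner_rank_le_mod M r -> inner_rank_le_mod (M *m N) r.
Proof.
case=> M' mM rkM'; exists (M' *m N); last exact: inner_rank_leMr.
by rewrite -mulmxBl; apply: mideal_mxMr.
Qed.

Lemma inner_rank_le_mod_sum I (s : seq I) (P : pred I) p q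
    (F : I -> 'M[R]_(p, q)) (b : I -> nat) :
  (forall i, P i -> inner_rank_le_mod (F i) (b i)) ->
  inner_rank_le_mod (\sum_(i <- s | P i) F i) (\sum_(i <- s | P i) b i)%N.
Proof.
move=> rkF; apply: (big_ind2 (@inner_rank_le_mod p q)) => //.
  by apply: inner_rank_le_mod_of; exists 0%N, 0, 0; rewrite mul0mx.
move=> M1 r1 M2 r2 [N1 m1 rk1] [N2 m2 rk2]; exists (N1 + N2).
  by rewrite opprD addrACA; apply: mideal_mxD.
exact: inner_rank_leD.
Qed.

(* If [1 = X Y] modulo [m] with [X = P D Q] of width [r < k], then row [r] of
   [P^-1 = P^-1 (1 - X Y) + D Q Y] lies in [m], impossible for a unit. *)
Lemma inner_rank_le_mod_id k r : inner_rank_le_mod (1%:M : 'M[R]_k) r -> (k <= r)%N.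
Proof.
case=> N m1N [r' [X [Y [le_r' EN]]]]; apply: leq_trans le_r'.
rewrite leqNgt; apply/negP => lt_r'k.
have [P [Q [d [Pu Qu _ _ EX]]]] := smith_normal_form X.
apply: (@unitmx_row_mideal _ (invmx P) (Ordinal lt_r'k)); first by rewrite unitmx_inv.
move=> j; have -> : invmx P = invmx P *m (1%:M - N) + rdiag_mx k r' d *m (Q *m Y).
  by rewrite mulmxBr mulmx1 EN EX !mulmxA mulVmx // mul1mx addrNK.
by rewrite mxE rdiag_mul_row0 // addr0; apply: mideal_mxMl.
Qed.

Lemma diag_enum p q (P : pred R) (D : 'M[R]_(p, q)) : is_rdiag_mx D -> ~~ P 0 ->
  exists (e : 'I_(diag_count P D) -> 'I_p) (f : 'I_(diag_count P D) -> 'I_q),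
  [/\ injective e, forall t, e t = f t :> nat, forall t, P (D (e t) (f t))
    & forall i j, i \notin codom e -> ~~ P (D i j)].
Proof.
move=> Ddiag nP0.
pose Z := [set ij : 'I_p * 'I_q | (ij.1 == ij.2 :> nat) && P (D ij.1 ij.2)].
pose z : 'I_(diag_count P D) -> 'I_p * 'I_q := enum_val (A := mem Z).
have zP t : (z t).1 = (z t).2 :> nat /\ P (D (z t).1 (z t).2).
  by have := enum_valP t; rewrite inE => /andP[/eqP].
exists (fun t => (z t).1), (fun t => (z t).2); split.
- move=> t u etu; apply: enum_val_inj; rewrite -/(z t) -/(z u).
  have ftu : (z t).2 = (z u).2 by apply: val_inj; rewrite /= -(zP t).1 -(zP u).1 etu.
  by move: etu ftu; case: (z t) => ? ?; case: (z u) => ? ? /= -> ->.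
- by move=> t; case: (zP t).
- by move=> t; case: (zP t).
move=> i j; apply: contraNN => Pij.
have eij : i = j :> nat by apply/eqP; apply: contraTT Pij => /Ddiag ->.
have Zij : (i, j) \in Z by rewrite inE /= eij eqxx.
by apply/codomP; exists (enum_rank_in Zij (i, j)); rewrite /z enum_rankK_in.
Qed.

Lemma diag_inner_rank p q (D : 'M[R]_(p, q)) :
  is_rdiag_mx D -> inner_rank_le D (diag_count (fun a => a != 0) D).
Proof.
move=> Ddiag; have [e [f [inj_e _ _ zero_out]]] :=
  @diag_enum p q (fun a => a != 0) D Ddiag (introT negPn (eqxx 0)).
have DE : D = (rowsub e 1%:M)^T *m (rowsub e 1%:M *m D).
  apply/eqP; rewrite -subr_eq0 mulmxA -{1}[D]mul1mx -mulmxBl tr_rowsub1_mul //.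
  rewrite diag_indicatorC mul_diag_mx; apply/eqP/matrixP => i j; rewrite !mxE.
  have [ie|/zero_out/negPn/eqP->] := boolP (i \in codom e); first by rewrite mul0r.
  by rewrite mulr0.
by rewrite {1}DE; apply: inner_rank_le_mul.
Qed.

Lemma diag_unit_part p q (D : 'M[R]_(p, q)) : is_rdiag_mx D ->
  let k := diag_count (fun a => a \is a GRing.unit) D in
  exists (S : 'M[R]_(k, p)) (G : 'M[R]_(q, k)),
  [/\ D *m G = S^T, S *m S^T = 1%:M, inner_rank_le (1%:M - S^T *m S) (p - k)
    & mideal_mx ((1%:M - S^T *m S) *m D)].
Proof.
move=> Ddiag k; have [e [f [inj_e ef unit_ef unit_out]]] :=
  @diag_enum p q (fun a => a \is a GRing.unit) D Ddiag (negbT (@unitr0 R)).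
exists (rowsub e 1%:M), (\matrix_(j, t) if j == f t then (D (e t) (f t))^-1 else 0).
rewrite rowsub1_mul_tr // tr_rowsub1_mul // diag_indicatorC; split=> //.
- apply/matrixP => i t; rewrite mxE (bigD1 (f t)) //= big1 => [|j ne_j]; last first.
    by rewrite mxE (negbTE ne_j) mulr0.
  rewrite !mxE eqxx addr0; have [-> | ne_i] := eqVneq i (e t).
    by rewrite mulrV ?eqxx.
  rewrite Ddiag ?mul0r ?(negbTE ne_i) // -ef.
  by apply: contra ne_i => /eqP eit; apply/eqP/val_inj.
- have := inner_rank_le_diag_indicator R [pred i | i \notin codom e].
  by rewrite card_predC_codom.
- move=> i j; rewrite mul_diag_mx !mxE.
  have [ie|/unit_out] := boolP (i \in codom e); first by rewrite mul0r mideal0.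
  by move=> /(_ j); rewrite mul1r.
Qed.

(* If [D = X Y] with [X = P D' Q] of width [r'], the rows of [P^-1 D] beyond
   [r'] vanish, so those of [V = P^-1 S^T] annihilate the nonzero entries of
   [D]; hence [1 = S P V] is congruent to a product through [r'] modulo [m]. *)
Lemma diag_count_le_inner_rank p q (D : 'M[R]_(p, q)) r :
  is_rdiag_mx D -> inner_rank_le D r -> (diag_count (fun a => a != 0%R) D <= r)%N.
Proof.
move=> Ddiag [r' [X [Y [le_r' EXY]]]]; apply: leq_trans le_r'.
have [e [f [inj_e ef nz_ef _]]] :=
  @diag_enum p q (fun a => a != 0) D Ddiag (introT negPn (eqxx 0)).
have [P [Q [d [Pu _ _ _ EX]]]] := smith_normal_form X.
pose V := invmx P *m (rowsub e 1%:M)^T.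
have V_mideal (i : 'I_p) t : (r' <= i)%N -> V i t \in mideal.
  move=> le_r'i; apply: (mideal_annihilator (nz_ef t)).
  rewrite /V mulmx_tr_rowsub1 mxE -(mulmx_rdiag_col _ _ Ddiag (ef t)).
  by rewrite EXY EX !mulmxA mulVmx // mul1mx -!mulmxA rdiag_mul_row0.
apply: inner_rank_le_mod_id.
have -> : 1%:M = rowsub e 1%:M *m P *m V by rewrite /V !mulmxA mulmxK // rowsub1_mul_tr.
apply: inner_rank_le_modMl; exists (\matrix_(i, t) if (i < r')%N then V i t else 0).
  move=> i t; rewrite mxE [X in _ + X]mxE [X in - X]mxE.
  by case: ltnP => [_|/V_mideal]; rewrite ?subrr ?subr0 ?mideal0.
exact: inner_rank_le_trunc.
Qed.

Lemma snf_diag_rdiag p q d : dvd_chain d -> snf_diag (rdiag_mx p q d).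
Proof.
move=> chd; apply/andP; split.
  apply/forallP => i; apply/forallP => j; apply/implyP => ne_ij.
  by rewrite mxE (negbTE ne_ij).
apply/forallP => i; apply/forallP => j; apply/forallP => i'; apply/forallP => j'.
by apply/implyP => /and3P[eij ei'j' lt_ii']; rewrite !mxE eij ei'j' dvd_chain_trans.
Qed.

Lemma mrk_mfrkP p q (B : 'M[R]_(p, q)) : exists P D Q,
  [/\ P \in unitmx, Q \in unitmx, is_rdiag_mx D, B = P *m D *m Q
    & mrk B = diag_count (fun a => a != 0) D
      /\ mfrk B = diag_count (fun a => a \is a GRing.unit) D].
Proof.
rewrite /mrk /mfrk; case: pickP => [D /andP[/andP[/forallP Ddiag _] BD] | no_snf].
  have [P /existsP[Q /and3P[Pu Qu /eqP EB]]] := existsP BD.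
  exists P, D, Q; split=> // i j ne_ij.
  by apply/eqP; move: (Ddiag i) => /forallP/(_ j)/implyP; apply.
have [P [Q [d [Pu Qu chd _ EB]]]] := smith_normal_form B.
have := no_snf (rdiag_mx p q d); rewrite /snf_of snf_diag_rdiag //=.
by move/existsP; case; exists P; apply/existsP; exists Q; rewrite Pu Qu EB eqxx.
Qed.

Lemma mrk_le p q (B : 'M[R]_(p, q)) r : inner_rank_le B r -> (mrk B <= r)%N.
Proof.
have [P [D [Q [Pu Qu Ddiag EB [-> _]]]]] := mrk_mfrkP B => rkB.
apply: diag_count_le_inner_rank Ddiag _.
have -> : D = invmx P *m B *m invmx Q by rewrite EB !mulmxA mulVmx // mul1mx mulmxK.
exact/inner_rank_leMr/inner_rank_leMl.
Qed.

Lemma inner_rank_le_mrk p q (B : 'M[R]_(p, q)) : inner_rank_le B (mrk B).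
Proof.
have [P [D [Q [_ _ Ddiag EB [-> _]]]]] := mrk_mfrkP B.
by rewrite {1}EB; apply/inner_rank_leMr/inner_rank_leMl/diag_inner_rank.
Qed.

Lemma mrkB p q (B1 B2 : 'M[R]_(p, q)) : (mrk (B1 - B2) <= mrk B1 + mrk B2)%N.
Proof.
apply/mrk_le/inner_rank_leD; first exact: inner_rank_le_mrk.
have -> : - B2 = - 1%:M *m B2 by rewrite mulNmx mul1mx.
exact/inner_rank_leMl/inner_rank_le_mrk.
Qed.

Lemma inner_rank_le_mod_mfrk p q (A : 'M[R]_(p, q)) : inner_rank_le_mod A (mfrk A).
Proof.
have [P [D [Q [_ _ Ddiag -> [_ ->]]]]] := mrk_mfrkP A.
apply/inner_rank_le_modMr/inner_rank_le_modMl.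
have [S [_ [_ _ _ mD]]] := diag_unit_part Ddiag.
exists (S^T *m (S *m D)); last exact: inner_rank_le_mul.
by rewrite mulmxA -{1}[D]mul1mx -mulmxBl.
Qed.

Lemma mfrk_le_rows p q (A : 'M[R]_(p, q)) : (mfrk A <= p)%N.
Proof.
have [P [D [Q [_ _ Ddiag _ [_ ->]]]]] := mrk_mfrkP A.
have [S [_ [_ SST _ _]]] := diag_unit_part Ddiag.
apply/inner_rank_le_mod_id/inner_rank_le_mod_of.
by rewrite -SST; apply: inner_rank_le_mul.
Qed.

(* With [A = P D Q], [M P] is [(M A) Q^-1 G S] plus a part supported on the
   [p - mfrk A] rows of [D] without a unit entry. *)
Lemma mrk_le_mulmx m p q (M : 'M[R]_(m, p)) (A : 'M[R]_(p, q)) :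
  (mrk M <= mrk (M *m A) + (p - mfrk A))%N.
Proof.
have [P [D [Q [Pu Qu Ddiag EA [_ ->]]]]] := mrk_mfrkP A.
have [S [G [DG _ rkS _]]] := diag_unit_part Ddiag.
have EMP : M *m P = M *m A *m (invmx Q *m G *m S) + M *m P *m (1%:M - S^T *m S).
  rewrite EA !mulmxA mulmxK // -(mulmxA _ D) DG mulmxBr mulmx1 -!mulmxA.
  by rewrite addrC subrK.
apply: mrk_le; rewrite -{1}[M](mulmxK Pu) EMP mulmxDl.
apply: inner_rank_leD; apply: inner_rank_leMr.
  exact/inner_rank_leMr/inner_rank_le_mrk.
exact: inner_rank_leMl.
Qed.

(* [1 = S P^-1 A Q^-1 G] is a sum over the blocks of [A], each congruent to a
   product through [mfrk] of that block. *)
Lemma mfrk_block_diag l (ns Ns : 'I_l -> nat)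
    (A : 'M[R]_(\sum_i ns i, \sum_i Ns i)) :
  (forall i j, i != j -> submxblock A i j = 0) ->
  (mfrk A <= \sum_i mfrk (submxblock A i i))%N.
Proof.
move=> Ablock.
have Adec : A = \sum_j submxrow 1%:M j *m submxblock A j j *m submxcol 1%:M j.
  rewrite -{1}[A]mulmx1 -(submxcolK (1%:M : 'M[R]_(\sum_i Ns i))) -{1}[A]submxrowK.
  rewrite mul_mxrow_mxcol; apply: eq_bigr => j _.
  by rewrite -(submxrow_mul_block_diag _ Ablock) mul1mx submxcolK.
have [P [D [Q [Pu Qu Ddiag EA [_ ->]]]]] := mrk_mfrkP A.
have [S [G [DG SST _ _]]] := diag_unit_part Ddiag.
apply: inner_rank_le_mod_id.
have -> : 1%:M = S *m invmx P *m A *m invmx Q *m G.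
  by rewrite EA !mulmxA mulmxK // mulmxKV // -mulmxA DG SST.
rewrite {1}Adec mulmx_sumr !mulmx_suml; apply: inner_rank_le_mod_sum => j _.
do 2!apply: inner_rank_le_modMr; rewrite -!mulmxA; do 3!apply: inner_rank_le_modMl.
exact/inner_rank_le_modMr/inner_rank_le_mod_mfrk.
Qed.

End ChainRing.

Section SumRank.
Variables (R : finComUnitRingType) (h : {poly R}).

Lemma coordmxB s (u v : 'rV[{poly %/ h}]_s) : coordmx (u - v) = coordmx u - coordmx v.
Proof. by apply/matrixP => k j; rewrite !mxE raddfB coefB. Qed.

Lemma coordmx_submxrow l (ns : 'I_l -> nat) (c : 'rV[{poly %/ h}]_(\sum_i ns i)) i :
  coordmx (submxrow c i) = submxrow (coordmx c) i.
Proof. by apply/matrixP => k j; rewrite !mxE. Qed.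

Lemma coordmx_mul n N (c : 'rV[{poly %/ h}]_n) (A : 'M[R]_(n, N)) :
  coordmx (c *m map_mx (qpolyC h) A) = coordmx c *m A.
Proof.
apply/matrixP => k j; rewrite !mxE raddf_sum coef_sum; apply: eq_bigr => i _.
rewrite !mxE /= Pdiv.CommonRing.rmodp_small ?coefMC //.
by rewrite mulrC mul_polyC (leq_ltn_trans (size_scale_leq _ _)) ?size_mk_monic.
Qed.

Hypothesis chainR : chain_ring R.

Lemma wtSR_subr l (ns : 'I_l -> nat) (u v : 'rV[{poly %/ h}]_(\sum_i ns i)) :
  (wtSR ns (u - v) <= wtSR ns u + wtSR ns v)%N.
Proof.
rewrite /wtSR -big_split /=; apply: leq_sum => i _.
by rewrite /rk_vec submxrowB coordmxB mrkB.
Qed.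

Lemma wtSR_le_mulmx l (ns Ns : 'I_l -> nat)
    (A : 'M[R]_(\sum_i ns i, \sum_i Ns i)) (x : 'rV[{poly %/ h}]_(\sum_i ns i)) :
  (forall i j, i != j -> submxblock A i j = 0) ->
  (wtSR ns x <= wtSR Ns (x *m map_mx (qpolyC h) A) + (\sum_i ns i - mfrk A))%N.
Proof.
move=> Ablock; rewrite /wtSR /rk_vec.
under [X in (_ <= X + _)%N]eq_bigr => j _ do rewrite coordmx_submxrow coordmx_mul
  (submxrow_mul_block_diag _ Ablock) -coordmx_submxrow.
have blockwise i := mrk_le_mulmx chainR (coordmx (submxrow x i)) (submxblock A i i).
apply: leq_trans (leq_sum _ (fun i _ => blockwise i)) _.
rewrite big_split /= leq_add2l sumnB => [|i _]; last exact: mfrk_le_rows.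
exact/leq_sub2l/mfrk_block_diag.
Qed.

Lemma sum_rank_decoding_unique l (ns Ns : 'I_l -> nat)
    (C : {pred 'rV[{poly %/ h}]_(\sum_i ns i)})
    (A : 'M[R]_(\sum_i ns i, \sum_i Ns i)) t :
  (forall i j, i != j -> submxblock A i j = 0) ->
  (forall c d, c \in C -> d \in C -> c != d ->
     (2 * t + (\sum_i ns i - mfrk A) + 1 <= wtSR ns (c - d))%N) ->
  forall c c' y, c \in C -> c' \in C ->
    (wtSR Ns (y - c *m map_mx (qpolyC h) A) <= t)%N ->
    (wtSR Ns (y - c' *m map_mx (qpolyC h) A) <= t)%N -> c = c'.
Proof.
move=> Ablock dist c c' y cC c'C wc wc'; apply/eqP/contraT => ne_cc'.
set A' := map_mx (qpolyC h) A in wc wc'.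
have wA : (wtSR Ns ((c - c') *m A') <= 2 * t)%N.
  have -> : (c - c') *m A' = (y - c' *m A') - (y - c *m A').
    by rewrite mulmxBl opprB [RHS]addrC addrA subrK.
  by rewrite mul2n -addnn; apply: leq_trans (wtSR_subr _ _) (leq_add wc' wc).
have wcc' : (wtSR ns (c - c') <= 2 * t + (\sum_i ns i - mfrk A))%N.
  exact: leq_trans (wtSR_le_mulmx (c - c') Ablock) (leq_add wA (leqnn _)).
by have := dist c c' cC c'C ne_cc'; rewrite addn1 ltnNge wcc'.
Qed.

End SumRank.

Theorem theorem7 (R : finComUnitRingType) (h : {poly R}) (l : nat)
    (ns Ns : 'I_l -> nat)
    (C : {pred 'rV[{poly %/ h}]_(\sum_i ns i)})
    (A : 'M[R]_(\sum_i ns i, \sum_i Ns i)) (t : nat) :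
  chain_ring R ->
  h \is monic -> irreducible_mod h ->
  (forall i, (0 < ns i)%N) -> (forall i, (0 < Ns i)%N) ->
  (forall i j : 'I_l, i != j -> submxblock A i j = 0) ->
  (exists c0, c0 \in C) ->
  (forall c d, c \in C -> d \in C -> c != d ->
     (2 * t + ((\sum_i ns i) - mfrk A) + 1 <= wtSR ns (c - d))%N) ->
  exists DA : 'rV[{poly %/ h}]_(\sum_i Ns i) -> 'rV[{poly %/ h}]_(\sum_i ns i),
    (forall y, DA y \in C) /\
    (forall c e, c \in C -> (wtSR Ns e <= t)%N ->
       DA (c *m map_mx (qpolyC h) A + e) = c).
Proof.
move=> chainR _ _ _ _ Ablock [c0 c0C] dist.
pose A' := map_mx (qpolyC h) A.
exists (fun y =>
  if [pick c in C | (wtSR Ns (y - c *m A') <= t)%N] is Some c then c else c0).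
split=> [y | c e cC we]; first by case: pickP => [c /andP[]|].
have wc : (wtSR Ns (c *m A' + e - c *m A') <= t)%N by rewrite addrAC subrr add0r.
case: pickP => [c' /andP[c'C wc'] | /(_ c)]; last by rewrite cC wc.
exact: (sum_rank_decoding_unique chainR Ablock dist c'C cC (y := c *m A' + e) wc' wc).
Qed.
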